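(* Let $d\ge 1$, $1\le r\le d$, and let $S(\cdot; r, d):\mathbb{R}^d\to\mathbb{R}$ be $S(x;r,d)=\frac{1}{\binom dr}\sum_{j=1}^{\binom dr} s(x;C(j,r,d))$. If $f_1,\dots,f_K$ is any order-$r$ functional decomposition of $S(\cdot; r, d)$, then $K \ge \binom{d}{r}$.
   Context: For $x\in\mathbb{R}^d$ and nonempty $A\subseteq\{1,\dots,d\}$, $s(x;A)=\max\{x_j:j\in A\}$; $C(k,r,d)$ is the $k$-th $r$-element subset of $\{1,\dots,d\}$ in lexicographic order. A function $f:\mathbb{R}^d\to\mathbb{R}$ has an order-$r$ functional decomposition $f_1,\dots,f_K$ if $f=\sum_{k=1}^K f_k$ and each $f_k:\mathbb{R}^d\to\mathbb{R}$ is a function of only $r$ of the coordinates (i.e. depends only on the coordinates indexed by some $r$-element subset of $\{1,\dots,d\}$). *)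

From mathcomp Require Import all_boot all_order all_algebra.
From mathcomp Require Import reals.
Set Implicit Arguments. Unset Strict Implicit. Unset Printing Implicit Defensive.
Import Order.TTheory GRing.Theory Num.Theory.
Local Open Scope ring_scope.

(* s(x;A) = max { x_j : j in A } for nonempty A (value 0 on the empty set,
   which is never used). Points of R^d are functions 'I_d -> R. *)
Definition smax (R : realType) (d : nat) (x : 'I_d -> R) (A : {set 'I_d}) : R :=
  match [pick j in A] with
  | Some j0 => \big[Num.max/x j0]_(j in A) x j
  | None => 0
  end.

(* S(x;r,d) = (1 / binom(d,r)) * sum over all r-element subsets A of s(x;A).
   (Summing over C(1,r,d),...,C(binom d r,r,d) in lexicographic order is the
   same as summing over all r-element subsets.) *)
Definition Sfun (R : realType) (r d : nat) (x : 'I_d -> R) : R :=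
  ('C(d, r))%:R^-1 * \sum_(A : {set 'I_d} | #|A| == r) smax x A.

Definition depends_only_on (R : realType) (d : nat)
    (f : ('I_d -> R) -> R) (B : {set 'I_d}) : Prop :=
  forall x y : 'I_d -> R, (forall j, j \in B -> x j = y j) -> f x = f y.

Definition order_decomposition (R : realType) (d r K : nat)
    (g : ('I_d -> R) -> R) (f : 'I_K -> ('I_d -> R) -> R) : Prop :=
  (forall x, g x = \sum_(k < K) f k x) /\
  (forall k, exists B : {set 'I_d}, #|B| = r /\ depends_only_on (f k) B).

Arguments Sfun : clear implicits.
Arguments order_decomposition : clear implicits.

(** The alternating sum [mobius_diff A g] of the values of [g] at the
    indicator vectors of the subsets of [A] is linear in [g] and vanishes as
    soon as [g] ignores a coordinate of [A].  On [s(.;A)] it equals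
    [-(-1)^|A|], since [s(1_T;A) = 1] for every nonempty [T] in [A], while
    every other term [s(.;A')] of [S(.;r,d)] ignores a coordinate of [A].
    Hence for each [r]-subset [A] some [f_k] of an order-[r] decomposition of
    [S] must depend on all coordinates of [A], i.e. have coordinate set [A]. *)

From mathcomp Require Import all_boot all_order all_algebra.
From mathcomp Require Import reals.
From mathcomp Require Import boolp.
Set Implicit Arguments. Unset Strict Implicit. Unset Printing Implicit Defensive.
Import Order.TTheory GRing.Theory Num.Theory.
Local Open Scope ring_scope.

Lemma binomial_leq_of_cover (T : finType) (r K : nat) (B : 'I_K -> {set T}) :
  (forall A : {set T}, #|A| = r -> exists k, B k = A) -> ('C(#|T|, r) <= K)%N.
Proof.
move=> cover; rewrite -card_draws -[K]card_ord.
apply: leq_trans (leq_imset_card B _); apply/subset_leq_card/subsetP => A.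
by rewrite inE => /eqP /cover [k <-]; apply: imset_f.
Qed.

Section MobiusDifference.

Variables (R : realType) (d : nat).
Implicit Types (A B T : {set 'I_d}) (g h : ('I_d -> R) -> R).

Definition indicator T : 'I_d -> R := fun j => (j \in T)%:R.

Definition mobius_diff A g : R :=
  \sum_(T : {set 'I_d} | T \subset A) (-1) ^+ #|A :\: T| * g (indicator T).

Lemma mobius_diff_ext A g h : g =1 h -> mobius_diff A g = mobius_diff A h.
Proof. by move=> gh; apply: eq_bigr => T _; rewrite gh. Qed.

Lemma mobius_diff_sum A (I : Type) (s : seq I) (P : pred I)
    (h : I -> ('I_d -> R) -> R) :
  mobius_diff A (fun x => \sum_(i <- s | P i) h i x)
  = \sum_(i <- s | P i) mobius_diff A (h i).
Proof.
by rewrite /mobius_diff exchange_big; apply: eq_bigr => T _; rewrite mulr_sumr.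
Qed.

Lemma mobius_diff_scale A c g :
  mobius_diff A (fun x => c * g x) = c * mobius_diff A g.
Proof.
by rewrite /mobius_diff mulr_sumr; apply: eq_bigr => T _; rewrite mulrCA.
Qed.

Lemma mobius_diff_eq0 A B g :
  ~~ (A \subset B) -> depends_only_on g B -> mobius_diff A g = 0.
Proof.
case/subsetPn=> i iA iNB gB.
have g_addi T : g (indicator (i |: T)) = g (indicator T).
  apply: gB => j jB; rewrite /indicator in_setU1.
  by have /negbTE-> : j != i by apply: contraNneq iNB => <-.
have sgn_addi T : i \notin T -> #|A :\: T| = #|A :\: (i |: T)|.+1.
  move=> iNT; have -> : A :\: T = i |: (A :\: (i |: T)).
    apply/setP => j; rewrite !inE.
    by case: eqP => [->|]; rewrite ?iA ?(negbTE iNT).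
  by rewrite cardsU1 !inE eqxx.
(* The terms of [T] and [i |: T], for [i \notin T], cancel out. *)
rewrite /mobius_diff (bigID (fun T => i \in T)) /=.
rewrite [X in X + _](reindex_onto (fun T => i |: T) (fun T => T :\ i)) /=;
  last by move=> T /andP[_ iT]; rewrite setD1K.
rewrite [X in X + _](eq_bigl (fun T => (T \subset A) && (i \notin T)))
  => [|T]; last first.
  rewrite setU11 subUset sub1set iA andbT.
  case: (boolP (i \in T)) => [iT | iNT]; last by rewrite setU1K // eqxx.
  rewrite /= andbF; apply/negbTE/andP => -[_ /eqP TiT].
  by rewrite -TiT setD11 in iT.
rewrite -big_split /=; apply: big1 => T /andP[_ iNT].
by rewrite g_addi (sgn_addi T) // exprS mulN1r mulNr addrN.
Qed.

Lemma mobius_diff_decomposition_support A (K : nat) g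
    (f : 'I_K -> ('I_d -> R) -> R) (B : 'I_K -> {set 'I_d}) :
    (forall x, g x = \sum_(k < K) f k x) ->
    (forall k, depends_only_on (f k) (B k)) ->
  mobius_diff A g != 0 -> exists k, A \subset B k.
Proof.
move=> gE fB; case: (pickP (fun k => A \subset B k)) => [k AB _ | noB].
  by exists k.
rewrite (mobius_diff_ext _ gE) mobius_diff_sum big1 ?eqxx // => k _.
exact: mobius_diff_eq0 (negbT (noB k)) (fB k).
Qed.

Lemma smax_depends A : depends_only_on (fun x : 'I_d -> R => smax x A) A.
Proof.
move=> x y xy; rewrite /smax; case: pickP => // j0 j0A.
by rewrite xy //; apply: eq_bigr => j jA; apply: xy.
Qed.

Lemma smax_indicator A T : T \subset A -> smax (indicator T) A = (T != set0)%:R.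
Proof.
move=> TA; rewrite /smax; case: pickP => [j0 j0A | A0]; last first.
  suff -> : T = set0 by rewrite eqxx.
  apply/setP => t; rewrite inE; apply/negbTE/negP.
  by move=> /(subsetP TA); rewrite [_ \in A]A0.
have [-> | /set0Pn[t tT]] := eqVneq T set0.
  apply: (big_ind (eq^~ 0)) => [||j _]; rewrite /indicator ?inE //.
  by move=> a b -> ->; rewrite maxxx.
apply/le_anti/andP; split.
  apply: (big_ind (fun v => v <= 1)) => [||j _];
    rewrite /indicator ?lern1 ?leq_b1 //.
  by move=> a b a1 b1; rewrite ge_max a1 b1.
by rewrite (bigD1 t (subsetP TA t tT)) le_max /indicator tT lexx.
Qed.

Lemma mobius_diff_smax A :
  A != set0 -> mobius_diff A (fun x : 'I_d -> R => smax x A) = - (-1) ^+ #|A|.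
Proof.
case/set0Pn => i iA.
have : mobius_diff A (fun _ => 1) = 0.
  apply: (mobius_diff_eq0 (B := set0)) => //.
  by apply/subsetPn; exists i; rewrite ?inE.
rewrite /mobius_diff !(bigD1 set0 (sub0set A)) /= setD0.
rewrite smax_indicator ?sub0set // eqxx.
move/eqP; rewrite mulr1 mulr0 add0r addr_eq0 => /eqP->; rewrite opprK.
by apply: eq_bigr => T /andP[TA T0]; rewrite smax_indicator ?T0.
Qed.

Lemma mobius_diff_Sfun_neq0 (r : nat) A :
  #|A| = r -> (0 < r)%N -> mobius_diff A (Sfun R r d) != 0.
Proof.
move=> Ar r_gt0; have A0 : A != set0 by rewrite -card_gt0 Ar.
have binom_neq0 : 'C(d, r) != 0%N.
  by rewrite -lt0n bin_gt0 -Ar -[X in (_ <= X)%N]card_ord max_card.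
have other_terms (S : {set 'I_d}) :
    #|S| == r -> S != A -> mobius_diff A (fun x : 'I_d -> R => smax x S) = 0.
  move=> /eqP Sr SA; apply: (mobius_diff_eq0 _ (@smax_depends S)).
  by apply: (contraNN _ SA) => AS; rewrite eq_sym eqEcard AS Sr Ar leqnn.
rewrite /Sfun mobius_diff_scale mobius_diff_sum (bigD1 A) ?Ar ?eqxx //.
rewrite big1 => [|S /andP[]]; last exact: other_terms.
rewrite /= addr0 mobius_diff_smax // mulf_neq0 ?invr_eq0 ?pnatr_eq0 //.
by rewrite oppr_eq0 expf_neq0 // oppr_eq0 oner_eq0.
Qed.

End MobiusDifference.

Theorem theorem3 (R : realType) (d r K : nat) (hd : (1 <= d)%N)
    (hr1 : (1 <= r)%N) (hrd : (r <= d)%N)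
    (f : 'I_K -> ('I_d -> R) -> R) :
  order_decomposition R d r K (Sfun R r d) f -> ('C(d, r) <= K)%N.
Proof.
move=> [S_sum f_local].
have [B B_spec] := choice f_local.
have := @binomial_leq_of_cover _ r K B; rewrite card_ord; apply=> A Ar.
have [k AB] := mobius_diff_decomposition_support S_sum (fun k => (B_spec k).2)
  (mobius_diff_Sfun_neq0 R Ar hr1).
by exists k; apply/eqP; rewrite eq_sym eqEcard AB (B_spec k).1 Ar leqnn.
Qed.
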